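(* Let $d\geq 1$ and let $x_1,\dots,x_m\in\mathbb{R}^d$ be distinct vectors such that $\|x_i+x_j\|_2=1$ for all $i\neq j$, where $\|\cdot\|_2$ is the Euclidean norm. Then $m\leq d+1$ if $d\neq 2$, and $m\leq 4$ if $d=2$. Both bounds are attained: for each $d$ there exist such configurations with $m=d+1$ (if $d\neq 2$) and $m=4$ (if $d=2$). *)

(* Vectors of R^d are row vectors 'rV[R]_d over an arbitrary
   real closed field R (includes the real numbers). *)
From HB Require Import structures.
From mathcomp Require Import all_boot all_order all_algebra.
Set Implicit Arguments. Unset Strict Implicit. Unset Printing Implicit Defensive.
Import Order.TTheory GRing.Theory Num.Theory.
Local Open Scope ring_scope.

Definition eucl_norm (R : rcfType) (d : nat) (x : 'rV[R]_d) : R :=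
  Num.sqrt (\sum_(i < d) x 0 i ^+ 2).

Definition sumnorm_bound (d : nat) : nat := if d == 2%N then 4%N else d.+1.

From HB Require Import structures.
From mathcomp Require Import all_boot all_order all_algebra.
From mathcomp Require Import ring lra.
Set Implicit Arguments. Unset Strict Implicit. Unset Printing Implicit Defensive.
Import Order.TTheory GRing.Theory Num.Theory.
Local Open Scope ring_scope.

(* Write a_i = |x_i|^2 and c_i = 4 a_i - 1.  The hypothesis says
   2 <x_i, x_j> = 1 - a_i - a_j for i <> j, i.e. the lifted vectors
   (x_i, a_i, 1) of R^(d+2) are pairwise orthogonal for a nondegenerate
   quadratic form, with "squared lengths" c_i.  For m = d + 2 the matrix A of
   lifted vectors is square; distinctness of the x_i forces every c_i <> 0,
   so A is invertible and A^T diag(1/c_i) A is the inverse form.  Its last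
   2x2 block gives sum 1/c_i = 0 and sum a_i/c_i = 1, whence
   d + 2 = sum (1 + 1/c_i) = 4 sum a_i/c_i = 4.  So d + 2 points only exist
   for d = 2, and then five points are impossible: each four of them have
   sum 1/c_i = 0, which forces all 1/c_i to vanish. *)

Section DotProduct.
Variables (R : realDomainType) (d : nat).
Implicit Types (u v w : 'rV[R]_d) (a : R).

Definition dotv u v : R := \sum_(k < d) u 0 k * v 0 k.
Definition sqnorm v : R := dotv v v.

Lemma dotvC u v : dotv u v = dotv v u.
Proof. by apply: eq_bigr => k _; rewrite mulrC. Qed.

Lemma dotvDl u v w : dotv (u + v) w = dotv u w + dotv v w.
Proof. by rewrite -big_split; apply: eq_bigr => k _; rewrite mxE mulrDl. Qed.

Lemma dotvNl u v : dotv (- u) v = - dotv u v.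
Proof. by rewrite -sumrN; apply: eq_bigr => k _; rewrite mxE mulNr. Qed.

Lemma dotvZl a u v : dotv (a *: u) v = a * dotv u v.
Proof. by rewrite mulr_sumr; apply: eq_bigr => k _; rewrite mxE mulrA. Qed.

Lemma dotvZr a u v : dotv u (a *: v) = a * dotv u v.
Proof. by rewrite dotvC dotvZl dotvC. Qed.

Lemma dotv_delta_mxl (k : 'I_d) v : dotv (delta_mx 0 k) v = v 0 k.
Proof.
rewrite /dotv (bigD1 k) //= big1 => [|l lk]; first by rewrite mxE !eqxx mul1r addr0.
by rewrite mxE eqxx (negbTE lk) mul0r.
Qed.

Lemma sqnorm_delta_mx (k : 'I_d) : sqnorm (delta_mx 0 k) = 1.
Proof. by rewrite /sqnorm dotv_delta_mxl mxE !eqxx. Qed.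

Lemma sqnorm_const_mx1 : sqnorm (const_mx 1) = d%:R.
Proof.
by rewrite /sqnorm /dotv (eq_bigr (fun=> 1)) ?sumr_const ?card_ord // => k _; rewrite mxE mulr1.
Qed.

Lemma sqnorm_ge0 v : 0 <= sqnorm v.
Proof. by apply: sumr_ge0 => k _; rewrite -expr2 sqr_ge0. Qed.

Lemma sqnorm_eq0 v : sqnorm v = 0 -> v = 0.
Proof.
move=> v0; apply/rowP => k; rewrite mxE; apply/eqP; rewrite -sqrf_eq0 expr2.
by apply/eqP/(psumr_eq0P _ v0) => // l _; rewrite -expr2 sqr_ge0.
Qed.

Lemma sqnormD u v : sqnorm (u + v) = sqnorm u + sqnorm v + dotv u v *+ 2.
Proof. by rewrite /sqnorm !dotvDl ![dotv _ (u + v)]dotvC !dotvDl [dotv v u]dotvC; ring. Qed.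

Lemma dotvNr u v : dotv u (- v) = - dotv u v.
Proof. by rewrite dotvC dotvNl dotvC. Qed.

Lemma sqnormB u v : sqnorm (u - v) = sqnorm u + sqnorm v - dotv u v *+ 2.
Proof. by rewrite sqnormD /sqnorm dotvNl !dotvNr opprK mulNrn. Qed.

Lemma sqnormZ a v : sqnorm (a *: v) = a ^+ 2 * sqnorm v.
Proof. by rewrite /sqnorm dotvZl dotvC dotvZl mulrA expr2. Qed.

End DotProduct.

Definition unit_sums (R : realDomainType) d m (x : 'I_m -> 'rV[R]_d) :=
  forall i j, i != j -> sqnorm (x i + x j) = 1.

Lemma eucl_norm_eq1 (R : rcfType) d (v : 'rV[R]_d) :
  eucl_norm v = 1 <-> sqnorm v = 1.
Proof.
have -> : eucl_norm v = Num.sqrt (sqnorm v).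
  by congr Num.sqrt; apply: eq_bigr => k _; rewrite expr2.
split => [e|->]; last exact: sqrtr1.
by apply/eqP; rewrite -(eqr_sqrt (sqnorm_ge0 v) ler01) e sqrtr1.
Qed.

Section LiftForm.
Variable R : numFieldType.

Definition lift_form2 : 'M[R]_2 :=
  \matrix_(k, l) if (k == ord0) || (l == ord0) then (k != l)%:R else -1.

Definition lift_form2_inv : 'M[R]_2 :=
  \matrix_(k, l) ((k == ord0) || (l == ord0))%:R.

Lemma lift_form2K : lift_form2 *m lift_form2_inv = 1%:M.
Proof.
apply/matrixP => k l; rewrite !mxE !big_ord_recl big_ord0 !mxE.
by case: k => [[|[|k]] Hk] //=; case: l => [[|[|l]] Hl] //=; ring.
Qed.

(* The form (u, s, r) . (u', s', r') = 2 <u, u'> + s r' + r s' - r r', so that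
   the lifted vectors (x_i, a_i, 1) pair to 2 <x_i, x_j> + a_i + a_j - 1. *)
Definition lift_form d : 'M[R]_(d + 2) := block_mx 2%:M 0 0 lift_form2.

Lemma lift_form_unit d : lift_form d \in unitmx.
Proof.
have [form2_unit _] := mulmx1_unit lift_form2K.
rewrite unitmxE det_ublock det_scalar unitrM -unitmxE form2_unit andbT.
by rewrite unitrX // unitfE pnatr_eq0.
Qed.

End LiftForm.
Arguments lift_form {R} d.

Lemma mulmx_tr_diag_invK (F : fieldType) n (A L : 'M[F]_n) (c : 'I_n -> F) :
  (forall i, c i != 0) -> A *m L *m A^T = diag_mx (\row_i c i) ->
  A^T *m diag_mx (\row_i (c i)^-1) *m A *m L = 1%:M.
Proof.
move=> c_neq0 ALA; set D := diag_mx _.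
have CD : diag_mx (\row_i c i) *m D = 1%:M.
  rewrite mulmx_diag -diag_const_mx; congr diag_mx.
  by apply/rowP => k; rewrite !mxE divff.
have /mulmx1C : A *m (L *m A^T *m D) = 1%:M by rewrite !mulmxA ALA CD.
by rewrite -!mulmxA => /mulmx1C; rewrite !mulmxA.
Qed.

Lemma eq0_of_sums_lift (R : numDomainType) n (t : 'I_n.+2 -> R) :
  (forall j : 'I_n.+2, \sum_(i < n.+1) t (lift j i) = 0) -> forall j, t j = 0.
Proof.
move=> t_lift; have sum_t j : \sum_i t i = t j.
  by rewrite (bigD1_ord j) //= t_lift addr0.
suff sum_t0 : \sum_i t i = 0 by move=> j; rewrite -sum_t.
have : \sum_(j < n.+2) \sum_i t i = \sum_i t i by apply: eq_bigr => j _; exact: sum_t.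
rewrite sumr_const card_ord mulrS -[RHS]addr0 => /addrI /eqP.
by rewrite mulrn_eq0 => /eqP.
Qed.

Section UnitSums.
Variables (R : realFieldType) (d m : nat) (x : 'I_m -> 'rV[R]_d).
Hypothesis x_sums : unit_sums x.

Definition defect i := sqnorm (x i) *+ 4 - 1.

Lemma dotv_unit_sums i j : i != j ->
  dotv (x i) (x j) *+ 2 = 1 - sqnorm (x i) - sqnorm (x j).
Proof. by move=> /x_sums; rewrite sqnormD => e; lra. Qed.

Lemma sqnormB_unit_sums i j : i != j -> sqnorm (x i - x j) *+ 2 = defect i + defect j.
Proof. by move=> /dotv_unit_sums e; rewrite sqnormB /defect; lra. Qed.

Lemma defect_eq0_of_eq i j : i != j -> x i = x j -> defect i = 0.
Proof. by move=> /dotv_unit_sums; rewrite /defect => e xij; rewrite -xij -/(sqnorm _) in e; lra. Qed.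

Lemma unit_sums_inj : (forall i j, defect i = 0 -> defect j = 0 -> i = j) ->
  injective x.
Proof.
move=> defect_uniq i j xij; have [// | ij] := eqVneq i j.
apply: defect_uniq; first exact: defect_eq0_of_eq ij xij.
by apply: (defect_eq0_of_eq (j := i)); rewrite // eq_sym.
Qed.

Definition lift_mx : 'M[R]_(m, d + 2) :=
  row_mx (\matrix_(i, k) x i 0 k)
         (\matrix_(i, k) if k == ord0 then sqnorm (x i) else 1).

Lemma lift_mx_gram :
  lift_mx *m lift_form d *m lift_mx^T = diag_mx (\row_i defect i).
Proof.
rewrite /lift_mx /lift_form mul_row_block !mulmx0 addr0 add0r tr_row_mx.
rewrite mul_row_col mul_mx_scalar; apply/matrixP => i j; rewrite !mxE.
have -> : \sum_k (2 *: \matrix_(i, k) x i 0 k) i k * (\matrix_(i, k) x i 0 k)^T k j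
          = dotv (x i) (x j) *+ 2.
  by rewrite /dotv -sumrMnl; apply: eq_bigr => k _; rewrite !mxE -mulrA mulr_natl.
rewrite !big_ord_recl !big_ord0 !mxE /= !big_ord_recl !big_ord0 !mxE /=.
have [<- | ij] := eqVneq i j; rewrite /=; first by rewrite mulr1n /defect -/(sqnorm _); ring.
by rewrite mulr0n; move: (dotv_unit_sums ij); lra.
Qed.

Hypothesis x_inj : injective x.

Lemma defect_eq0_uniq i j : defect i = 0 -> defect j = 0 -> i = j.
Proof.
move=> ci cj; have [// | ij] := eqVneq i j; apply: x_inj; apply/eqP.
rewrite -subr_eq0; apply/eqP/sqnorm_eq0/eqP.
have : sqnorm (x i - x j) *+ 2 = 0 by rewrite sqnormB_unit_sums // ci cj addr0.
by move/eqP; rewrite mulrn_eq0.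
Qed.
End UnitSums.

Section CriticalFamily.
Variables (R : realFieldType) (d : nat) (x : 'I_(d + 2) -> 'rV[R]_d).
Hypotheses (x_inj : injective x) (x_sums : unit_sums x).

(* A kernel vector of A would be supported at i, the only zero defect, but the
   all-ones column of A annihilates such a vector. *)
Lemma defect_neq0 i : defect x i != 0.
Proof.
apply/eqP => ci; set A := lift_mx x.
have gramA := lift_mx_gram x_sums; rewrite -/A in gramA.
have /det0P [v v_neq0 vA] : \det A == 0.
  have := congr1 determinant gramA.
  rewrite det_diag (bigD1 i) //= mxE ci mul0r !det_mulmx det_tr => /eqP.
  have := lift_form_unit R d; rewrite unitmxE unitfE => /negbTE.
  by rewrite !mulf_eq0 => ->; rewrite orbF orbb.
have v_out k : k != i -> v 0 k = 0.
  move=> ki; have /rowP/(_ k) : v *m diag_mx (\row_i defect x i) = 0.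
    by rewrite -gramA !mulmxA vA !mul0mx.
  rewrite mul_mx_diag !mxE => /eqP; rewrite mulf_eq0 => /orP [/eqP // | /eqP ck].
  by move: ki; rewrite (defect_eq0_uniq x_sums x_inj ck ci) eqxx.
have v_in : v 0 i = 0.
  have /rowP/(_ (rshift d ord_max)) := vA; rewrite !mxE (bigD1 i) //= big1.
    by rewrite /A row_mxEr mxE mulr1 addr0.
  by move=> k ki; rewrite v_out ?mul0r.
move/eqP: v_neq0; apply; apply/rowP => k; rewrite mxE.
by have [-> | ki] := eqVneq k i; [exact: v_in | exact: v_out].
Qed.

Lemma lift_tail_gram :
  (rsubmx (lift_mx x))^T *m diag_mx (\row_i (defect x i)^-1) *m rsubmx (lift_mx x)
  = lift_form2_inv R.
Proof.
set G := _ *m rsubmx _.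
have := mulmx_tr_diag_invK defect_neq0 (lift_mx_gram x_sums).
rewrite -[lift_mx x]hsubmxK tr_row_mx mul_col_mx mul_col_row.
rewrite mulmx_block (scalar_mx_block d 2) => /eq_block_mx [_ _ _].
rewrite mulmx0 add0r -/G => G_form2.
by rewrite -[G]mulmx1 -lift_form2K mulmxA G_form2 mul1mx.
Qed.

Lemma lift_tail_gramE k l :
  \sum_i (if k == ord0 then sqnorm (x i) else 1) / defect x i
         * (if l == ord0 then sqnorm (x i) else 1) = lift_form2_inv R k l.
Proof.
rewrite -lift_tail_gram !mxE; apply: eq_bigr => i _.
by rewrite /lift_mx row_mxKr mul_mx_diag !mxE.
Qed.

Lemma sum_inv_defect : \sum_i (defect x i)^-1 = 0.
Proof.
have := lift_tail_gramE ord_max ord_max; rewrite !mxE /=.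
by under eq_bigr do rewrite mul1r mulr1.
Qed.

Lemma sum_sqnorm_div_defect : \sum_i sqnorm (x i) / defect x i = 1.
Proof.
have := lift_tail_gramE ord0 ord_max; rewrite !mxE /=.
by under eq_bigr do rewrite mulr1.
Qed.

Lemma critical_dim : d = 2%N.
Proof.
have : (\sum_i sqnorm (x i) / defect x i) *+ 4 = \sum_i (1 + (defect x i)^-1).
  rewrite -sumrMnl; apply: eq_bigr => i _.
  rewrite -mulrnAl -[_ *+ 4](subrK 1) mulrDl divff ?defect_neq0 //.
  by rewrite mul1r addrC.
rewrite sum_sqnorm_div_defect big_split /= sum_inv_defect addr0 sumr_const card_ord.
by move/eqP; rewrite eqr_nat addn2 => /eqP [].
Qed.

End CriticalFamily.

Lemma unit_sums_comp (R : realDomainType) d m n (x : 'I_m -> 'rV[R]_d)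
    (g : 'I_n -> 'I_m) :
  unit_sums x -> injective g -> unit_sums (x \o g).
Proof. by move=> x_sums g_inj i j ij; apply: x_sums; rewrite (inj_eq g_inj). Qed.

Lemma widen_ord_inj m n (le_mn : (m <= n)%N) : injective (widen_ord le_mn).
Proof. by move=> i j /(congr1 val) /= /val_inj. Qed.

Section UpperBound.
Variables (R : realFieldType) (d m : nat) (x : 'I_m -> 'rV[R]_d).
Hypotheses (x_inj : injective x) (x_sums : unit_sums x).

Lemma card_le_succ_dim : d != 2%N -> (m <= d.+1)%N.
Proof.
rewrite leqNgt; apply: contra => lt_dm; have le_dm : (d + 2 <= m)%N by rewrite addn2.
apply/eqP; apply: (@critical_dim R d (x \o widen_ord le_dm)).
  by apply: inj_comp => //; apply: widen_ord_inj.
by apply: (unit_sums_comp x_sums); apply: widen_ord_inj.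
Qed.

Lemma card_le4_dim2 : d = 2%N -> (m <= 4)%N.
Proof.
move=> d2; subst d; rewrite leqNgt; apply/negP => lt4m.
pose y := x \o widen_ord lt4m.
have y_inj : injective y by apply: inj_comp => //; apply: widen_ord_inj.
have y_sums := unit_sums_comp x_sums (@widen_ord_inj _ _ lt4m).
have sub_inj j : injective (y \o lift j) by apply: inj_comp => //; apply: lift_inj.
have sub_sums j := unit_sums_comp y_sums (@lift_inj _ j).
have sums_lift (j : 'I_5) : \sum_(i < 4) (defect y (lift j i))^-1 = 0.
  exact: (@sum_inv_defect R 2 (y \o lift j) (sub_inj j) (sub_sums j)).
have := @defect_neq0 R 2 (y \o lift ord0) (sub_inj ord0) (sub_sums ord0) ord0.
by rewrite -invr_eq0 (@eq0_of_sums_lift _ 3 (fun i => (defect y i)^-1)) ?eqxx.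
Qed.

End UpperBound.

Section BasisConfig.
Variables (R : rcfType) (d : nat).
Local Notation t := (Num.sqrt (2^-1 : R)).
Local Notation r := (Num.sqrt (d.+1%:R : R)).
Local Notation s := ((r + 1)^-1 * t).

(* s solves d s^2 + 2 t s = t^2, which makes |t e_k + s (1, ..., 1)| = 1. *)
Definition basis_config (i : 'I_d.+1) : 'rV[R]_d :=
  if unlift ord_max i is Some k then t *: delta_mx 0 k else s *: const_mx 1.

Lemma sqr_sqrt_half : t ^+ 2 = 2^-1.
Proof. by rewrite sqr_sqrtr // invr_ge0 ler0n. Qed.

Lemma sqnorm_basis_delta (k l : 'I_d) : k != l ->
  sqnorm (t *: delta_mx 0 k + t *: delta_mx 0 l) = 1.
Proof.
move=> kl; rewrite sqnormD !sqnormZ dotvZl dotvZr dotv_delta_mxl !sqnorm_delta_mx.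
by rewrite mxE eqxx (negbTE kl) /= mulr0 sqr_sqrt_half; lra.
Qed.

Lemma sqnorm_basis_const (k : 'I_d) : sqnorm (t *: delta_mx 0 k + s *: const_mx 1) = 1.
Proof.
rewrite sqnormD !sqnormZ dotvZl dotvZr dotv_delta_mxl sqnorm_delta_mx.
rewrite sqnorm_const_mx1 mxE.
have r_ge0 : 0 <= r by exact: sqrtr_ge0.
have w_neq0 : r + 1 != 0 by rewrite gt_eqF // ltr_wpDl.
have dE : d%:R = (r + 1) ^+ 2 - (r + 1) * 2.
  have : r ^+ 2 = d.+1%:R by rewrite sqr_sqrtr ?ler0n.
  by rewrite -natr1; nra.
rewrite dE; transitivity (t ^+ 2 *+ 2); first by field.
by rewrite sqr_sqrt_half; lra.
Qed.

Lemma basis_config_unit_sums : unit_sums basis_config.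
Proof.
move=> i j; rewrite /basis_config.
case: (unliftP ord_max i) => [k ->|->]; case: (unliftP ord_max j) => [l ->|->].
- by move=> kl; apply: sqnorm_basis_delta; apply: contraNneq kl => ->.
- by move=> _; exact: sqnorm_basis_const.
- by move=> _; rewrite addrC; exact: sqnorm_basis_const.
- by rewrite eqxx.
Qed.

Lemma basis_config_defect_eq0 i : defect basis_config i = 0 -> i = ord_max.
Proof.
case: (unliftP ord_max i) => [k ->|-> //]; rewrite /defect /basis_config liftK.
by rewrite sqnormZ sqnorm_delta_mx sqr_sqrt_half => ?; exfalso; lra.
Qed.

Lemma basis_config_inj : injective basis_config.
Proof.
apply: (unit_sums_inj basis_config_unit_sums) => i j /basis_config_defect_eq0 ->.
by move/basis_config_defect_eq0.
Qed.

End BasisConfig.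

Section Plane.
Variable R : realDomainType.

Definition vec2 (p q : R) : 'rV[R]_2 := \row_k if k == ord0 then p else q.

Lemma vec2D p q p' q' : vec2 p q + vec2 p' q' = vec2 (p + p') (q + q').
Proof. by apply/rowP => k; rewrite !mxE; case: ifP. Qed.

Lemma sqnorm_vec2 p q : sqnorm (vec2 p q) = p ^+ 2 + q ^+ 2.
Proof. by rewrite /sqnorm /dotv !big_ord_recl big_ord0 !mxE /= addr0 !expr2. Qed.

End Plane.

Section TriangleConfig.
Variable R : rcfType.
Local Notation h := (Num.sqrt (3 : R)).

Definition triangle_config (i : 'I_4) : 'rV[R]_2 :=
  vec2 [:: 0; 1; - 2^-1; - 2^-1]`_i [:: 0; 0; h / 2; - (h / 2)]`_i.

Lemma sqr_sqrt3 : h ^+ 2 = 3.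
Proof. by rewrite sqr_sqrtr // ler0n. Qed.

Lemma triangle_config_unit_sums : unit_sums triangle_config.
Proof.
move=> i j; have := sqr_sqrt3; rewrite /triangle_config vec2D sqnorm_vec2.
by case: i j => [[|[|[|[|i]]]] Hi] [[|[|[|[|j]]]] Hj] //= h3 _; nra.
Qed.

Lemma triangle_config_defect_neq0 i : defect triangle_config i != 0.
Proof.
have := sqr_sqrt3; rewrite /defect /triangle_config sqnorm_vec2.
by case: i => [[|[|[|[|i]]]] Hi] //= h3; apply/eqP; nra.
Qed.

Lemma triangle_config_inj : injective triangle_config.
Proof.
apply: (unit_sums_inj triangle_config_unit_sums) => i j /eqP.
by rewrite (negbTE (triangle_config_defect_neq0 i)).
Qed.

End TriangleConfig.

Theorem theorem8 (R : rcfType) (d : nat) (hd : (1 <= d)%N) :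
  (forall (m : nat) (x : 'I_m -> 'rV[R]_d),
      injective x ->
      (forall i j : 'I_m, i != j -> eucl_norm (x i + x j) = 1) ->
      (m <= sumnorm_bound d)%N) /\
  (exists x : 'I_(sumnorm_bound d) -> 'rV[R]_d,
      injective x /\
      (forall i j : 'I_(sumnorm_bound d), i != j -> eucl_norm (x i + x j) = 1)).
Proof.
have unit_sumsE m (x : 'I_m -> 'rV[R]_d) :
    (forall i j, i != j -> eucl_norm (x i + x j) = 1) <-> unit_sums x.
  by split=> x_sums i j ij; apply/eucl_norm_eq1; apply: x_sums.
rewrite /sumnorm_bound; have [d2 | d_neq2] := eqVneq d 2%N.
  split=> [m x x_inj /unit_sumsE x_sums | ]; first exact: card_le4_dim2 x_inj x_sums d2.
  subst d; exists (triangle_config R); split; first exact: (@triangle_config_inj R).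
  by apply/unit_sumsE; exact: triangle_config_unit_sums.
split=> [m x x_inj /unit_sumsE x_sums | ]; first exact: card_le_succ_dim x_inj x_sums d_neq2.
exists (@basis_config R d); split; first exact: (@basis_config_inj R d).
by apply/unit_sumsE; exact: basis_config_unit_sums.
Qed.
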